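(* For all integers $i\ge1$ and $0\le j<i$ there is a constant $C$ (independent of $n$ and of the sequences) such that for every $n$ and every pair of sequences $\eta,\dot\eta$ as below, $\lVert\eta\rVert^2_{i-j,i}\le Ce_{i+j-1}$, $\lVert\dot\eta\rVert^2_{i-j,i}\le Ce_{i+j}$, $\lvert\eta\rvert^2_{\infty;i-j,i}\le Ce_{i+j}$, $\lvert\dot\eta\rvert^2_{\infty;i-j,i}\le Ce_{i+j+1}$, and $\lvert\dot\eta\rvert^2_{\infty;1/2,i}\le Ce_{2i+1}$.
   Context: Fix $n$. $\eta_k,\dot\eta_k\in\mathbb{R}^d$ for $1\le k\le n+1$ with $\eta_{n+1}=\dot\eta_{n+1}=0$, extended for $k>n+1$ by $\eta_k=-\eta_{2n+2-k}$, $\dot\eta_k=-\dot\eta_{2n+2-k}$. $(\nabla_+f)_k=n(f_{k+1}-f_k)$; $s_k^{(r)}=\frac{\Gamma(k+r)}{n^r\Gamma(k)}$. Seminorms: $\lVert\eta\rVert^2_{r,m}=\frac1n\sum_{k=1}^{n-m+1}s_k^{(r)}\lvert(\nabla_+^m\eta)_k\rvert^2$, $\lvert\eta\rvert^2_{\infty;r,m}=\max_{1\le k\le n-m+1}s_k^{(r)}\lvert(\nabla_+^m\eta)_k\rvert^2$, same for $\dot\eta$. Energy: $e_m=\frac1n\sum_{\ell=0}^m\sum_{k=1}^{n-\lfloor\ell/2\rfloor}\big(s_k^{(\ell)}\lvert(\nabla_+^\ell\dot\eta)_k\rvert^2+s_k^{(\ell+1)}\lvert(\nabla_+^{\ell+1}\eta)_k\rvert^2\big)$.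 *)

From Stdlib Require Import Reals Lra Lia Arith.
Open Scope R_scope.

(* rsum f lo hi = sum_{k=lo}^{hi} f k  (empty if hi < lo) *)
Fixpoint rsum_cnt (f : nat -> R) (lo cnt : nat) : R :=
  match cnt with
  | O => 0
  | S c => rsum_cnt f lo c + f (lo + c)%nat
  end.
Definition rsum (f : nat -> R) (lo hi : nat) : R := rsum_cnt f lo (S hi - lo).

(* rmax f lo hi = max_{lo<=k<=hi} f k  (0 if empty; used only on nonnegative f) *)
Fixpoint rmax_cnt (f : nat -> R) (lo cnt : nat) : R :=
  match cnt with
  | O => 0
  | S c => Rmax (rmax_cnt f lo c) (f (lo + c)%nat)
  end.
Definition rmax (f : nat -> R) (lo hi : nat) : R := rmax_cnt f lo (S hi - lo).

(* A sequence of vectors in R^d: seqv k c = c-th coordinate (c < d) of the k-th term. *)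
Definition seqv := nat -> nat -> R.

Definition vnorm2 (d : nat) (v : nat -> R) : R :=
  match d with O => 0 | S d' => rsum (fun c => v c ^ 2) 0 d' end.

(* Odd reflection extension about n+1: eta_k = - eta_{2n+2-k} for n+1 < k <= 2n+1.
   Beyond 2n+1 the paper's extension is undefined; we put 0 there. *)
Definition ext (n : nat) (eta : seqv) : seqv := fun k c =>
  if (k <=? n + 1)%nat then eta k c
  else if (k <=? 2 * n + 1)%nat then - eta (2 * n + 2 - k)%nat c
  else 0.

Definition nabla (n : nat) (f : seqv) : seqv := fun k c => INR n * (f (S k) c - f k c).
Definition nablap (n m : nat) (f : seqv) : seqv := Nat.iter m (nabla n) f.

(* rising product k (k+1) ... (k+r-1) = Gamma(k+r)/Gamma(k) *)
Fixpoint rising (k r : nat) : R :=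
  match r with O => 1 | S r' => rising k r' * INR (k + r') end.

(* s_k^{(r)} = Gamma(k+r) / (n^r Gamma(k)), integer r *)
Definition s (n r k : nat) : R := rising k r / INR n ^ r.

(* s_k^{(1/2)} = Gamma(k+1/2) / (n^{1/2} Gamma(k)),
   with Gamma(k+1/2) = sqrt(PI) * prod_{t=0}^{k-1} (t + 1/2), Gamma(k) = (k-1)! *)
Fixpoint half_rising (k : nat) : R :=
  match k with O => 1 | S k' => half_rising k' * (INR k' + / 2) end.
Definition s_half (n k : nat) : R :=
  sqrt PI * half_rising k / INR (fact (k - 1)) / sqrt (INR n).

Definition snorm2 (n d : nat) (w : nat -> R) (m : nat) (f : seqv) : R :=
  / INR n * rsum (fun k => w k * vnorm2 d (nablap n m (ext n f) k)) 1 (n + 1 - m).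
Definition snorminf2 (n d : nat) (w : nat -> R) (m : nat) (f : seqv) : R :=
  rmax (fun k => w k * vnorm2 d (nablap n m (ext n f) k)) 1 (n + 1 - m).

Definition energy (n d m : nat) (eta deta : seqv) : R :=
  / INR n * rsum (fun l =>
     rsum (fun k =>
        s n l k * vnorm2 d (nablap n l (ext n deta) k)
      + s n (S l) k * vnorm2 d (nablap n (S l) (ext n eta) k))
      1 (n - Nat.div2 l)) 0 m.

(* On the upper part k >= n / (4 p) of the index range all weights s^(r)_k are
   bounded above and below, and by pigeonhole some index K there (an anchor) has
   s^(p)_K |(nabla^p F)_K|^2 <= 4 p ||F||^2_{p,p}.  Below K, summation by parts
   against s^(r+1) gives a discrete Hardy inequality trading two powers of the
   weight for one more difference,
     ||F||_{r,p} <= C (||F||_{r+2,p+1} + ||F||_{p,p}),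
   and iterating it bounds every seminorm by diagonal ones ||F||_{q,q}, which are
   energy terms.  Pointwise bounds propagate |(nabla^p F)_k|^2 from K: upwards by
   one-step Young inequalities, downwards against the nondecreasing weight s^(r+1)
   (or Gamma(k + 1/2) / Gamma(k) for s^(1/2), with a half-integer Hardy
   inequality); the accumulated errors are again seminorms. *)

From Stdlib Require Import Reals Lra Lia Psatz Arith.
Open Scope R_scope.

Lemma rsum_cnt_ext f g lo L : (forall k, (lo <= k < lo + L)%nat -> f k = g k) ->
  rsum_cnt f lo L = rsum_cnt g lo L.
Proof.
  induction L as [|L IH]; simpl; intros H; [reflexivity|].
  rewrite IH by (intros; apply H; lia). rewrite H by lia. reflexivity.
Qed.

Lemma rsum_cnt_le f g lo L : (forall k, (lo <= k < lo + L)%nat -> f k <= g k) ->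
  rsum_cnt f lo L <= rsum_cnt g lo L.
Proof.
  induction L as [|L IH]; simpl; intros H; [lra|].
  apply Rplus_le_compat; [apply IH; intros; apply H|apply H]; lia.
Qed.

Lemma rsum_cnt_nonneg f lo L : (forall k, (lo <= k < lo + L)%nat -> 0 <= f k) ->
  0 <= rsum_cnt f lo L.
Proof.
  induction L as [|L IH]; simpl; intros H; [lra|].
  apply Rplus_le_le_0_compat; [apply IH; intros|]; apply H; lia.
Qed.

Lemma rsum_cnt_scal a f lo L : rsum_cnt (fun k => a * f k) lo L = a * rsum_cnt f lo L.
Proof. induction L as [|L IH]; simpl; [ring|]. rewrite IH; ring. Qed.

Lemma rsum_cnt_plus f g lo L :
  rsum_cnt (fun k => f k + g k) lo L = rsum_cnt f lo L + rsum_cnt g lo L.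
Proof. induction L as [|L IH]; simpl; [ring|]. rewrite IH; ring. Qed.

Lemma rsum_cnt_app f lo L1 L2 :
  rsum_cnt f lo (L1 + L2) = rsum_cnt f lo L1 + rsum_cnt f (lo + L1) L2.
Proof.
  induction L2 as [|L2 IH]; simpl.
  - rewrite Nat.add_0_r; ring.
  - rewrite Nat.add_succ_r; simpl. rewrite IH, Nat.add_assoc. ring.
Qed.

Lemma rsum_cnt_shift f lo L : rsum_cnt (fun k => f (S k)) lo L = rsum_cnt f (S lo) L.
Proof. induction L as [|L IH]; simpl; [reflexivity|]. now rewrite IH. Qed.

Lemma rsum_cnt_cons f lo L : rsum_cnt f lo (S L) = f lo + rsum_cnt f (S lo) L.
Proof.
  change (S L) with (1 + L)%nat. rewrite rsum_cnt_app. simpl.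
  rewrite Nat.add_0_r, Nat.add_1_r. ring.
Qed.

Lemma rsum_cnt_subrange f lo1 L1 lo2 L2 : (lo2 <= lo1)%nat -> (lo1 + L1 <= lo2 + L2)%nat ->
  (forall k, (lo2 <= k < lo2 + L2)%nat -> 0 <= f k) ->
  rsum_cnt f lo1 L1 <= rsum_cnt f lo2 L2.
Proof.
  intros H1 H2 H.
  replace L2 with ((lo1 - lo2) + (L1 + (L2 - (lo1 - lo2) - L1)))%nat by lia.
  rewrite !rsum_cnt_app. replace (lo2 + (lo1 - lo2))%nat with lo1 by lia.
  assert (0 <= rsum_cnt f lo2 (lo1 - lo2)) by (apply rsum_cnt_nonneg; intros; apply H; lia).
  assert (0 <= rsum_cnt f (lo1 + L1) (L2 - (lo1 - lo2) - L1))
    by (apply rsum_cnt_nonneg; intros; apply H; lia).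
  lra.
Qed.

Lemma rsum_cnt_term_le f lo L k : (lo <= k < lo + L)%nat ->
  (forall k, (lo <= k < lo + L)%nat -> 0 <= f k) -> f k <= rsum_cnt f lo L.
Proof.
  intros Hk H. replace (f k) with (rsum_cnt f k 1) by (simpl; rewrite Nat.add_0_r; ring).
  apply rsum_cnt_subrange; auto; lia.
Qed.

Lemma rsum_cnt_telescope_le (x y z : nat -> R) lo L :
  (forall m, (lo <= m < lo + L)%nat -> x m + y m <= x (S m) + z m) ->
  x lo + rsum_cnt y lo L <= x (lo + L)%nat + rsum_cnt z lo L.
Proof.
  induction L as [|L IH]; simpl; intros H.
  - rewrite Nat.add_0_r; lra.
  - assert (IHL := IH (fun m Hm => H m ltac:(lia))).
    assert (Hlast := H (lo + L)%nat ltac:(lia)).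
    rewrite Nat.add_succ_r. lra.
Qed.

Lemma rsum_cnt_telescope_bound (x z : nat -> R) lo L :
  (forall m, (lo <= m < lo + L)%nat -> x m <= x (S m) + z m) ->
  x lo <= x (lo + L)%nat + rsum_cnt z lo L.
Proof.
  intros H. assert (Z : rsum_cnt (fun _ => 0) lo L = 0).
  { clear H. induction L as [|L IH]; simpl; [reflexivity|]. rewrite IH; ring. }
  assert (T := rsum_cnt_telescope_le x (fun _ => 0) z lo L).
  rewrite Z, Rplus_0_r in T. apply T. intros m Hm. rewrite Rplus_0_r. now apply H.
Qed.

Lemma rsum_cnt_pigeonhole f lo c : (1 <= c)%nat ->
  exists K, (lo <= K < lo + c)%nat /\ INR c * f K <= rsum_cnt f lo c.
Proof.
  intros Hc. destruct c as [|c]; [lia|]. clear Hc. induction c as [|c IH].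
  - exists lo. split; [lia|]. simpl. rewrite Nat.add_0_r. lra.
  - destruct IH as [K [HK HfK]].
    destruct (Rle_dec (INR (S (S c)) * f (lo + S c)%nat) (rsum_cnt f lo (S (S c)))) as [h|h].
    + exists (lo + S c)%nat. split; [lia|exact h].
    + exists K. split; [lia|]. apply Rnot_le_lt in h.
      change (rsum_cnt f lo (S (S c))) with (rsum_cnt f lo (S c) + f (lo + S c)%nat) in *.
      rewrite !S_INR in *. assert (0 <= INR c) by apply pos_INR. nra.
Qed.

Lemma rsum_from_1 f hi : rsum f 1 hi = rsum_cnt f 1 hi.
Proof. unfold rsum. simpl. now rewrite Nat.sub_0_r. Qed.

Lemma rmax_cnt_le f lo L B : 0 <= B -> (forall k, (lo <= k < lo + L)%nat -> f k <= B) ->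
  rmax_cnt f lo L <= B.
Proof.
  intros HB. induction L as [|L IH]; simpl; intros H; [lra|].
  apply Rmax_lub; [apply IH; intros|]; apply H; lia.
Qed.

Lemma vnorm2_eq d v : vnorm2 d v = rsum_cnt (fun c => v c ^ 2) 0 d.
Proof. now destruct d. Qed.

Lemma vnorm2_nonneg d v : 0 <= vnorm2 d v.
Proof. rewrite vnorm2_eq. apply rsum_cnt_nonneg. intros. apply pow2_ge_0. Qed.

Lemma vnorm2_ext d u v : (forall c, u c = v c) -> vnorm2 d u = vnorm2 d v.
Proof. intros H. rewrite !vnorm2_eq. apply rsum_cnt_ext. intros. now rewrite H. Qed.

Lemma vnorm2_scal d a v : vnorm2 d (fun c => a * v c) = a ^ 2 * vnorm2 d v.
Proof. rewrite !vnorm2_eq, <- rsum_cnt_scal. apply rsum_cnt_ext. intros. ring. Qed.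

Lemma sq_le_young t u v : 0 < t -> u ^ 2 <= (1 + t) * v ^ 2 + (1 + / t) * (u - v) ^ 2.
Proof.
  intros Ht.
  assert (E : (1 + t) * v ^ 2 + (1 + / t) * (u - v) ^ 2 - u ^ 2 = (t * v - (u - v)) ^ 2 * / t)
    by (field; lra).
  assert (0 <= (t * v - (u - v)) ^ 2 * / t)
    by (apply Rmult_le_pos; [apply pow2_ge_0|left; now apply Rinv_0_lt_compat]).
  lra.
Qed.

Lemma vnorm2_young d t u v : 0 < t ->
  vnorm2 d u <= (1 + t) * vnorm2 d v + (1 + / t) * vnorm2 d (fun c => u c - v c).
Proof.
  intros Ht. rewrite !vnorm2_eq, <- !rsum_cnt_scal, <- rsum_cnt_plus.
  apply rsum_cnt_le. intros. now apply sq_le_young.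
Qed.

(** * The weights *)

Lemma rising_nonneg k r : 0 <= rising k r.
Proof. induction r; cbn [rising]; [lra|]. apply Rmult_le_pos; [assumption|apply pos_INR]. Qed.

Lemma rising_shift k r : rising k (S r) = INR k * rising (S k) r.
Proof.
  induction r as [|r IH].
  - cbn [rising]. rewrite Nat.add_0_r. ring.
  - change (rising k (S (S r))) with (rising k (S r) * INR (k + S r)).
    rewrite IH. cbn [rising]. replace (k + S r)%nat with (S k + r)%nat by lia. ring.
Qed.

Lemma rising_mono k r : rising k r <= rising (S k) r.
Proof.
  induction r; cbn [rising]; [lra|].
  apply Rmult_le_compat; auto using rising_nonneg, pos_INR. apply le_INR; lia.
Qed.

Lemma rising_ge_pow k r : INR k ^ r <= rising k r.
Proof.
  induction r; cbn [rising pow]; [lra|]. rewrite Rmult_comm.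
  apply Rmult_le_compat; auto using pow_le, pos_INR. apply le_INR; lia.
Qed.

Lemma rising_le_pow k r : rising k r <= (INR k + INR r) ^ r.
Proof.
  induction r as [|r IH]; cbn [rising pow]; [lra|]. rewrite Rmult_comm, plus_INR, S_INR.
  assert (0 <= INR k) by apply pos_INR. assert (0 <= INR r) by apply pos_INR.
  assert ((INR k + INR r) ^ r <= (INR k + (INR r + 1)) ^ r) by (apply pow_incr; lra).
  assert (0 <= rising k r) by apply rising_nonneg.
  apply Rmult_le_compat; lra.
Qed.

Lemma s_0 n k : s n 0 k = 1.
Proof. unfold s. simpl. field. Qed.

Lemma s_1 n m : s n 1 m = INR m / INR n.
Proof. unfold s. cbn [rising pow]. now rewrite Nat.add_0_r, Rmult_1_l, Rmult_1_r. Qed.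

(* Gamma (k + 1/2) / (sqrt PI * Gamma k) *)
Definition half_ratio (k : nat) : R := half_rising k / INR (fact (k - 1)).

Lemma half_ratio_pos k : 0 < half_ratio k.
Proof.
  apply Rdiv_lt_0_compat; [|apply lt_0_INR, lt_O_fact].
  induction k; simpl; [lra|]. assert (0 <= INR k) by apply pos_INR. nra.
Qed.

Lemma half_ratio_succ k : (1 <= k)%nat -> half_ratio (S k) = half_ratio k * (1 + / (2 * INR k)).
Proof.
  intros Hk. destruct k as [|k]; [lia|]. unfold half_ratio.
  replace (S (S k) - 1)%nat with (S k) by lia. replace (S k - 1)%nat with k by lia.
  change (half_rising (S (S k))) with (half_rising (S k) * (INR (S k) + / 2)).
  change (fact (S k)) with (S k * fact k)%nat. rewrite mult_INR.
  assert (0 < INR (S k)) by (apply lt_0_INR; lia). assert (0 < INR (fact k)) by apply lt_0_INR, lt_O_fact.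
  field. lra.
Qed.

Lemma half_ratio_mono k : (1 <= k)%nat -> half_ratio k <= half_ratio (S k).
Proof.
  intros Hk. rewrite half_ratio_succ by lia.
  assert (0 < half_ratio k) by apply half_ratio_pos. assert (1 <= INR k) by (apply (le_INR 1); lia).
  assert (0 < / (2 * INR k)) by (apply Rinv_0_lt_compat; lra). nra.
Qed.

Lemma half_ratio_sq_le k : (1 <= k)%nat -> half_ratio k ^ 2 <= INR k - / 4.
Proof.
  intros Hk. induction k as [|k IH]; [lia|]. destruct k as [|k].
  - unfold half_ratio. simpl. lra.
  - rewrite half_ratio_succ by lia. assert (IHk := IH ltac:(lia)).
    set (x := half_ratio (S k)) in *. rewrite (S_INR (S k)).
    set (m := INR (S k)) in *. assert (1 <= m) by (apply (le_INR 1); lia).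
    replace ((x * (1 + / (2 * m))) ^ 2) with (x ^ 2 * (2 * m + 1) ^ 2 / (4 * m ^ 2)) by (field; lra).
    apply Rmult_le_reg_r with (4 * m ^ 2); [nra|].
    replace (x ^ 2 * (2 * m + 1) ^ 2 / (4 * m ^ 2) * (4 * m ^ 2)) with (x ^ 2 * (2 * m + 1) ^ 2)
      by (field; lra).
    assert (x ^ 2 * (2 * m + 1) ^ 2 <= (m - / 4) * (2 * m + 1) ^ 2)
      by (apply Rmult_le_compat_r; [apply pow2_ge_0|auto]).
    nra.
Qed.

Section Weights.

Variable n : nat.
Hypothesis Hn : (1 <= n)%nat.

Lemma INR_mesh_pos : 0 < INR n.
Proof. apply lt_0_INR. lia. Qed.

Lemma s_nonneg r k : 0 <= s n r k.
Proof.
  apply Rmult_le_pos; [apply rising_nonneg|].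
  left. apply Rinv_0_lt_compat, pow_lt, INR_mesh_pos.
Qed.

Lemma s_succ r k : s n (S r) k = s n r k * INR (k + r) / INR n.
Proof.
  assert (H := INR_mesh_pos). assert (INR n ^ r <> 0) by (apply pow_nonzero; lra).
  unfold s. simpl. field. now split; [|lra].
Qed.

Lemma s_shift r m : s n (S r) m = INR m / INR n * s n r (S m).
Proof.
  assert (H := INR_mesh_pos). assert (INR n ^ r <> 0) by (apply pow_nonzero; lra).
  unfold s. rewrite rising_shift. simpl. field. now split; [|lra].
Qed.

Lemma s_mono r m : s n r m <= s n r (S m).
Proof.
  apply Rmult_le_compat_r; [|apply rising_mono].
  left. apply Rinv_0_lt_compat, pow_lt, INR_mesh_pos.
Qed.

Lemma s_succ_ge r m : (1 <= m)%nat -> (1 + INR m) * s n r m <= 2 * INR n * s n (S r) m.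
Proof.
  intros Hm. assert (H := INR_mesh_pos). rewrite s_succ, plus_INR.
  assert (1 <= INR m) by (apply (le_INR 1); lia). assert (0 <= INR r) by apply pos_INR.
  assert (0 <= s n r m) by apply s_nonneg.
  replace (2 * INR n * (s n r m * (INR m + INR r) / INR n)) with (2 * (INR m + INR r) * s n r m)
    by (field; lra).
  nra.
Qed.

Lemma s_le_const r k : (k <= n + 1)%nat -> s n r k <= (2 + INR r) ^ r.
Proof.
  intros Hk. assert (H := INR_mesh_pos).
  apply Rle_trans with ((INR k + INR r) ^ r / INR n ^ r).
  - apply Rmult_le_compat_r; [|apply rising_le_pow].
    left. apply Rinv_0_lt_compat, pow_lt; lra.
  - unfold Rdiv. rewrite <- pow_inv, <- Rpow_mult_distr. apply pow_incr. split.
    + apply Rmult_le_pos; [rewrite <- plus_INR; apply pos_INR|left; now apply Rinv_0_lt_compat].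
    + apply Rmult_le_reg_r with (INR n); [lra|].
      rewrite Rmult_assoc, Rinv_l, Rmult_1_r by lra.
      assert (INR k <= INR n + 1) by (rewrite <- S_INR; apply le_INR; lia).
      assert (1 <= INR n) by (apply (le_INR 1); lia). assert (0 <= INR r) by apply pos_INR.
      nra.
Qed.

Lemma s_ge_inv_pow P q k : (n <= 4 * P * k)%nat -> 1 <= (4 * INR P) ^ q * s n q k.
Proof.
  intros HP. assert (H := INR_mesh_pos).
  apply Rle_trans with ((4 * INR P) ^ q * (INR k ^ q / INR n ^ q)).
  - unfold Rdiv. rewrite <- pow_inv, <- !Rpow_mult_distr, <- (pow1 q).
    apply pow_incr. split; [lra|]. apply Rmult_le_reg_r with (INR n); [lra|].
    replace (4 * INR P * (INR k * / INR n) * INR n) with (INR (4 * P * k))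
      by (rewrite !mult_INR; simpl; field; lra).
    rewrite Rmult_1_l. now apply le_INR.
  - apply Rmult_le_compat_l; [apply pow_le; assert (0 <= INR P) by apply pos_INR; lra|].
    apply Rmult_le_compat_r; [left; apply Rinv_0_lt_compat, pow_lt; lra|apply rising_ge_pow].
Qed.

Lemma s_top_compare r P q k : (k <= n + 1)%nat -> (n <= 4 * P * k)%nat ->
  s n r k <= (2 + INR r) ^ r * (4 * INR P) ^ q * s n q k.
Proof.
  intros Hk HP. assert (A := s_le_const r k Hk). assert (B := s_ge_inv_pow P q k HP).
  assert (0 <= (2 + INR r) ^ r) by (apply pow_le; assert (0 <= INR r) by apply pos_INR; lra).
  rewrite Rmult_assoc. nra.
Qed.

Lemma s_half_eq k : s_half n k = sqrt PI / sqrt (INR n) * half_ratio k.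
Proof.
  unfold s_half, half_ratio. assert (0 < sqrt (INR n)) by apply sqrt_lt_R0, INR_mesh_pos.
  assert (0 < INR (fact (k - 1))) by apply lt_0_INR, lt_O_fact. field. lra.
Qed.

Lemma s_half_scale_nonneg : 0 <= sqrt PI / sqrt (INR n).
Proof.
  apply Rmult_le_pos; [apply sqrt_pos|].
  left. apply Rinv_0_lt_compat, sqrt_lt_R0, INR_mesh_pos.
Qed.

Lemma s_half_nonneg k : 0 <= s_half n k.
Proof.
  rewrite s_half_eq. apply Rmult_le_pos; [apply s_half_scale_nonneg|left; apply half_ratio_pos].
Qed.

Lemma s_half_le_4 k : (1 <= k <= n + 1)%nat -> s_half n k <= 4.
Proof.
  intros Hk. assert (Hnpos := INR_mesh_pos). assert (H0 := s_half_nonneg k).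
  enough (s_half n k ^ 2 <= 16) by nra.
  assert (E : s_half n k ^ 2 = PI / INR n * half_ratio k ^ 2).
  { rewrite s_half_eq. assert (0 < sqrt (INR n)) by (apply sqrt_lt_R0; lra).
    replace ((sqrt PI / sqrt (INR n) * half_ratio k) ^ 2)
      with (sqrt PI ^ 2 / sqrt (INR n) ^ 2 * half_ratio k ^ 2) by (field; lra).
    rewrite <- !Rsqr_pow2, !Rsqr_sqrt; [reflexivity|lra|left; apply PI_RGT_0]. }
  rewrite E. assert (Hh := half_ratio_sq_le k ltac:(lia)). assert (HP := PI_4). assert (HP0 := PI_RGT_0).
  assert (INR k <= INR n + 1) by (rewrite <- S_INR; apply le_INR; lia).
  assert (1 <= INR n) by (apply (le_INR 1); lia). assert (0 <= half_ratio k ^ 2) by apply pow2_ge_0.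
  apply Rle_trans with (4 / INR n * INR k).
  - apply Rmult_le_compat; try lra.
    + apply Rmult_le_pos; [lra|left; now apply Rinv_0_lt_compat].
    + apply Rmult_le_compat_r; [left; now apply Rinv_0_lt_compat|lra].
  - apply Rmult_le_reg_r with (INR n); [lra|].
    replace (4 / INR n * INR k * INR n) with (4 * INR k) by (field; lra). nra.
Qed.

End Weights.

(** * Hardy inequalities and propagation along a sequence *)

(* The hypothesis is Young's inequality with t = (r + 1) / (2 m). *)
Lemma hardy_scalar m r a b X : 1 <= m -> 0 <= r -> 0 <= b -> 0 <= X ->
  a <= (1 + (r + 1) / (2 * m)) * b + (1 + 2 * m / (r + 1)) * X ->
  m * a + (r + 1) / 2 * b <= (m + 1 + r) * b + 2 * m * (m + 1 + r) * X.
Proof.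
  intros Hm Hr Hb HX H.
  assert (Hma : m * a <= (m + (r + 1) / 2) * b + (m + 2 * m * m / (r + 1)) * X).
  { replace ((m + (r + 1) / 2) * b + (m + 2 * m * m / (r + 1)) * X)
      with (m * ((1 + (r + 1) / (2 * m)) * b + (1 + 2 * m / (r + 1)) * X)) by (field; lra).
    apply Rmult_le_compat_l; lra. }
  assert (2 * m * m / (r + 1) <= 2 * m * m).
  { assert (/ (r + 1) <= 1) by (rewrite <- Rinv_1; apply Rinv_le_contravar; lra).
    assert (0 < / (r + 1)) by (apply Rinv_0_lt_compat; lra).
    unfold Rdiv. nra. }
  assert ((m + 2 * m * m / (r + 1)) * X <= 2 * m * (m + 1 + r) * X) by (apply Rmult_le_compat_r; nra).
  nra.
Qed.

Section Differences.

Variables n d : nat.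
Hypothesis Hn : (1 <= n)%nat.

Lemma vnorm2_le_next (g : seqv) k t : 0 < t ->
  vnorm2 d (g k) <= (1 + t) * vnorm2 d (g (S k)) + (1 + / t) * ((/ INR n) ^ 2 * vnorm2 d (nabla n g k)).
Proof.
  intros Ht. assert (H := INR_mesh_pos n Hn).
  replace ((/ INR n) ^ 2 * vnorm2 d (nabla n g k)) with (vnorm2 d (fun c => g k c - g (S k) c)).
  - now apply vnorm2_young.
  - replace ((/ INR n) ^ 2) with ((- / INR n) ^ 2) by ring. rewrite <- vnorm2_scal.
    apply vnorm2_ext. intros c. unfold nabla. field. lra.
Qed.

Lemma vnorm2_next_le (g : seqv) k t : 0 < t ->
  vnorm2 d (g (S k)) <= (1 + t) * vnorm2 d (g k) + (1 + / t) * ((/ INR n) ^ 2 * vnorm2 d (nabla n g k)).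
Proof.
  intros Ht. assert (H := INR_mesh_pos n Hn).
  replace ((/ INR n) ^ 2 * vnorm2 d (nabla n g k)) with (vnorm2 d (fun c => g (S k) c - g k c)).
  - now apply vnorm2_young.
  - rewrite <- vnorm2_scal. apply vnorm2_ext. intros c. unfold nabla. field. lra.
Qed.

Lemma hardy_step (g : seqv) r m : (1 <= m)%nat ->
  INR n * s n (S r) m * vnorm2 d (g m) + (INR r + 1) / 2 * s n r (S m) * vnorm2 d (g (S m)) <=
  INR n * s n (S r) (S m) * vnorm2 d (g (S m)) + 2 * s n (S (S r)) m * vnorm2 d (nabla n g m).
Proof.
  intros Hm. assert (Hnpos := INR_mesh_pos n Hn).
  assert (1 <= INR m) by (apply (le_INR 1); lia). assert (0 <= INR r) by apply pos_INR.
  assert (Ht : 0 < (INR r + 1) / (2 * INR m)) by (apply Rdiv_lt_0_compat; lra).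
  assert (Y := vnorm2_le_next g m _ Ht). rewrite Rinv_div in Y.
  rewrite (s_succ n Hn (S r) m), (s_succ n Hn r (S m)), (s_shift n Hn r m).
  replace (INR (m + S r)) with (INR m + 1 + INR r) by (rewrite plus_INR, S_INR; ring).
  replace (INR (S m + r)) with (INR m + 1 + INR r) by (rewrite plus_INR, S_INR; ring).
  set (sig := s n r (S m)). assert (0 <= sig) by apply (s_nonneg n Hn).
  set (a := vnorm2 d (g m)) in *. set (b := vnorm2 d (g (S m))) in *.
  set (c := vnorm2 d (nabla n g m)) in *.
  assert (Hs := hardy_scalar (INR m) (INR r) a b ((/ INR n) ^ 2 * c) ltac:(lra) ltac:(lra)
    ltac:(apply vnorm2_nonneg) ltac:(apply Rmult_le_pos; [apply pow2_ge_0|apply vnorm2_nonneg]) Y).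
  replace (INR n * (INR m / INR n * sig) * a + (INR r + 1) / 2 * sig * b)
    with (sig * (INR m * a + (INR r + 1) / 2 * b)) by (field; lra).
  replace (INR n * (sig * (INR m + 1 + INR r) / INR n) * b +
           2 * (INR m / INR n * sig * (INR m + 1 + INR r) / INR n) * c)
    with (sig * ((INR m + 1 + INR r) * b + 2 * INR m * (INR m + 1 + INR r) * ((/ INR n) ^ 2 * c)))
    by (field; lra).
  now apply Rmult_le_compat_l.
Qed.

Lemma hardy_sum (g : seqv) r K : (1 <= K)%nat ->
  (INR r + 1) / 2 * rsum_cnt (fun k => s n r k * vnorm2 d (g k)) 1 K <=
  INR n * s n (S r) K * vnorm2 d (g K) +
  2 * rsum_cnt (fun k => s n (S (S r)) k * vnorm2 d (nabla n g k)) 1 (K - 1).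
Proof.
  intros HK. assert (Hnpos := INR_mesh_pos n Hn).
  assert (T := rsum_cnt_telescope_le (fun m => INR n * s n (S r) m * vnorm2 d (g m))
     (fun m => (INR r + 1) / 2 * (s n r (S m) * vnorm2 d (g (S m))))
     (fun m => 2 * (s n (S (S r)) m * vnorm2 d (nabla n g m))) 1 (K - 1)).
  rewrite !rsum_cnt_scal in T. replace (1 + (K - 1))%nat with K in T by lia.
  assert (First : (INR r + 1) / 2 * (s n r 1 * vnorm2 d (g 1%nat)) <=
                  INR n * s n (S r) 1 * vnorm2 d (g 1%nat)).
  { rewrite (s_succ n Hn). replace (INR (1 + r)) with (INR r + 1) by (rewrite plus_INR; simpl; ring).
    assert (0 <= s n r 1 * vnorm2 d (g 1%nat))
      by (apply Rmult_le_pos; [apply (s_nonneg n Hn)|apply vnorm2_nonneg]).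
    assert (0 <= INR r) by apply pos_INR.
    replace (INR n * (s n r 1 * (INR r + 1) / INR n) * vnorm2 d (g 1%nat))
      with ((INR r + 1) * (s n r 1 * vnorm2 d (g 1%nat))) by (field; lra).
    nra. }
  specialize (T ltac:(intros m Hm; assert (Hstep := hardy_step g r m ltac:(lia)); lra)).
  replace K with (S (K - 1)) at 1 by lia.
  rewrite rsum_cnt_cons, <- rsum_cnt_shift. cbv beta. lra.
Qed.

Lemma half_hardy_sum (g : seqv) K : (1 <= K)%nat ->
  half_ratio 1 * vnorm2 d (g 1%nat) +
  rsum_cnt (fun m => half_ratio m / INR m / 4 * vnorm2 d (g (S m))) 1 (K - 1) <=
  half_ratio K * vnorm2 d (g K) +
  rsum_cnt (fun m => (1 + 4 * INR m) * half_ratio m * ((/ INR n) ^ 2 * vnorm2 d (nabla n g m))) 1 (K - 1).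
Proof.
  intros HK. replace K with (1 + (K - 1))%nat at 2 3 by lia.
  apply (rsum_cnt_telescope_le (fun m => half_ratio m * vnorm2 d (g m))). intros m Hm.
  assert (1 <= INR m) by (apply (le_INR 1); lia).
  assert (Y := vnorm2_le_next g m (/ (4 * INR m)) ltac:(apply Rinv_0_lt_compat; lra)).
  rewrite Rinv_inv in Y. rewrite half_ratio_succ by lia. assert (Hh := half_ratio_pos m).
  set (a := vnorm2 d (g m)) in *. set (b := vnorm2 d (g (S m))) in *.
  set (X := (/ INR n) ^ 2 * vnorm2 d (nabla n g m)) in *.
  assert (half_ratio m * a <= half_ratio m * ((1 + / (4 * INR m)) * b + (1 + 4 * INR m) * X))
    by (apply Rmult_le_compat_l; lra).
  replace (half_ratio m * ((1 + / (4 * INR m)) * b + (1 + 4 * INR m) * X))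
    with (half_ratio m * (1 + / (2 * INR m)) * b + (1 + 4 * INR m) * half_ratio m * X
          - half_ratio m / INR m / 4 * b) in * by (field; lra).
  lra.
Qed.

Lemma vnorm2_weighted_descent (g : seqv) (W : nat -> R) k L : (1 <= k)%nat ->
  (forall m, (k <= m < k + L)%nat -> 0 <= W m <= W (S m)) ->
  W k * vnorm2 d (g k) <= W (k + L)%nat * vnorm2 d (g (k + L)%nat) +
    rsum_cnt (fun m => W m / INR m * vnorm2 d (g (S m)) +
       (1 + INR m) * W m * ((/ INR n) ^ 2 * vnorm2 d (nabla n g m))) k L.
Proof.
  intros Hk HW. apply (rsum_cnt_telescope_bound (fun m => W m * vnorm2 d (g m))).
  intros m Hm. destruct (HW m Hm) as [W0 W1].
  assert (Hmpos : 0 < INR m) by (apply lt_0_INR; lia).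
  assert (Y := vnorm2_le_next g m (/ INR m) ltac:(apply Rinv_0_lt_compat; lra)).
  rewrite Rinv_inv in Y.
  set (a := vnorm2 d (g m)) in *. set (b := vnorm2 d (g (S m))) in *.
  set (X := (/ INR n) ^ 2 * vnorm2 d (nabla n g m)) in *.
  assert (0 <= b) by apply vnorm2_nonneg.
  assert (W m * a <= W m * ((1 + / INR m) * b + (1 + INR m) * X)) by (apply Rmult_le_compat_l; auto).
  assert (W m * b <= W (S m) * b) by (apply Rmult_le_compat_r; auto).
  replace (W m * ((1 + / INR m) * b + (1 + INR m) * X))
    with (W m * b + (W m / INR m * b + (1 + INR m) * W m * X)) in * by (field; lra).
  lra.
Qed.

Lemma vnorm2_ascent (g : seqv) K L :
  vnorm2 d (g (K + L)%nat) <= vnorm2 d (g K) +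
    rsum_cnt (fun m => / INR n * vnorm2 d (g m) +
       (1 + INR n) * ((/ INR n) ^ 2 * vnorm2 d (nabla n g m))) K L.
Proof.
  enough (- vnorm2 d (g K) <= - vnorm2 d (g (K + L)%nat) +
    rsum_cnt (fun m => / INR n * vnorm2 d (g m) +
       (1 + INR n) * ((/ INR n) ^ 2 * vnorm2 d (nabla n g m))) K L) by lra.
  apply (rsum_cnt_telescope_bound (fun m => - vnorm2 d (g m))). intros m _.
  assert (Hnpos := INR_mesh_pos n Hn).
  assert (Y := vnorm2_next_le g m (/ INR n) ltac:(apply Rinv_0_lt_compat; lra)).
  rewrite Rinv_inv in Y. lra.
Qed.

Lemma half_ratio_below (g : seqv) K k : (1 <= k <= K)%nat ->
  half_ratio k * vnorm2 d (g k) <=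
  5 * (half_ratio K * vnorm2 d (g K) +
       rsum_cnt (fun m => (1 + 4 * INR m) * half_ratio m * ((/ INR n) ^ 2 * vnorm2 d (nabla n g m))) 1 (K - 1)).
Proof.
  intros Hk.
  assert (D := vnorm2_weighted_descent g half_ratio k (K - k) ltac:(lia)
    (fun m Hm => conj (Rlt_le _ _ (half_ratio_pos m)) (half_ratio_mono m ltac:(lia)))).
  replace (k + (K - k))%nat with K in D by lia. rewrite rsum_cnt_plus in D.
  assert (Hardy := half_hardy_sum g K ltac:(lia)).
  set (Z := rsum_cnt (fun m => (1 + 4 * INR m) * half_ratio m * ((/ INR n) ^ 2 * vnorm2 d (nabla n g m))) 1 (K - 1)) in *.
  assert (HX : forall m, 0 <= (/ INR n) ^ 2 * vnorm2 d (nabla n g m))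
    by (intros; apply Rmult_le_pos; [apply pow2_ge_0|apply vnorm2_nonneg]).
  assert (R1 : rsum_cnt (fun m => half_ratio m / INR m * vnorm2 d (g (S m))) k (K - k) <=
               4 * rsum_cnt (fun m => half_ratio m / INR m / 4 * vnorm2 d (g (S m))) 1 (K - 1)).
  { rewrite <- rsum_cnt_scal.
    apply Rle_trans with (rsum_cnt (fun m => half_ratio m / INR m * vnorm2 d (g (S m))) 1 (K - 1)).
    - apply rsum_cnt_subrange; try lia. intros m Hm. apply Rmult_le_pos; [|apply vnorm2_nonneg].
      left. apply Rdiv_lt_0_compat; [apply half_ratio_pos|apply lt_0_INR; lia].
    - right. apply rsum_cnt_ext. intros m Hm. field. apply not_0_INR. lia. }
  assert (R2 : rsum_cnt (fun m => (1 + INR m) * half_ratio m * ((/ INR n) ^ 2 * vnorm2 d (nabla n g m))) k (K - k) <= Z).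
  { apply Rle_trans with (rsum_cnt (fun m => (1 + INR m) * half_ratio m * ((/ INR n) ^ 2 * vnorm2 d (nabla n g m))) 1 (K - 1)).
    - apply rsum_cnt_subrange; try lia. intros m Hm.
      assert (0 <= INR m) by apply pos_INR. assert (Hh := half_ratio_pos m).
      apply Rmult_le_pos; [apply Rmult_le_pos|apply HX]; lra.
    - apply rsum_cnt_le. intros m Hm. apply Rmult_le_compat_r; [apply HX|].
      assert (0 <= INR m) by apply pos_INR. assert (Hh := half_ratio_pos m).
      apply Rmult_le_compat_r; lra. }
  assert (0 <= half_ratio 1 * vnorm2 d (g 1%nat))
    by (apply Rmult_le_pos; [left; apply half_ratio_pos|apply vnorm2_nonneg]).
  lra.
Qed.

End Differences.

(* ||F||^2_{r,p} and |F|^2_{infty;w,p} of the paper, for an already extended F. *)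
Definition wnorm (n d r p : nat) (F : seqv) : R :=
  / INR n * rsum_cnt (fun k => s n r k * vnorm2 d (nablap n p F k)) 1 (n + 1 - p).

Definition wsup (n d : nat) (w : nat -> R) (p : nat) (F : seqv) : R :=
  rmax_cnt (fun k => w k * vnorm2 d (nablap n p F k)) 1 (n + 1 - p).

Definition anchor (n d p : nat) (F : seqv) (K : nat) : Prop :=
  (1 <= K <= n + 1 - p)%nat /\ (n <= 4 * p * K)%nat /\
  s n p K * vnorm2 d (nablap n p F K) <= 4 * INR p * wnorm n d p p F.

Section Seminorms.

Variables n d : nat.
Hypothesis Hn : (1 <= n)%nat.

Lemma wnorm_nonneg r p F : 0 <= wnorm n d r p F.
Proof.
  apply Rmult_le_pos; [left; apply Rinv_0_lt_compat, INR_mesh_pos, Hn|].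
  apply rsum_cnt_nonneg. intros. apply Rmult_le_pos; [apply (s_nonneg n Hn)|apply vnorm2_nonneg].
Qed.

Lemma rsum_cnt_le_wnorm r p F lo L : (1 <= lo)%nat -> (lo + L <= S (n + 1 - p))%nat ->
  rsum_cnt (fun k => s n r k * vnorm2 d (nablap n p F k)) lo L <= INR n * wnorm n d r p F.
Proof.
  intros Hlo HL. assert (Hnpos := INR_mesh_pos n Hn). unfold wnorm.
  rewrite <- Rmult_assoc, Rinv_r, Rmult_1_l by lra.
  apply rsum_cnt_subrange; try lia.
  intros. apply Rmult_le_pos; [apply (s_nonneg n Hn)|apply vnorm2_nonneg].
Qed.

Lemma wnorm_empty r p F : (n < p)%nat -> wnorm n d r p F = 0.
Proof. intros Hp. unfold wnorm. replace (n + 1 - p)%nat with 0%nat by lia. simpl. ring. Qed.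

Lemma anchor_exists p F : (1 <= p <= n)%nat -> exists K, anchor n d p F K.
Proof.
  intros Hp. assert (Hnpos := INR_mesh_pos n Hn).
  set (L := (n + 1 - p)%nat). set (c := (L - L / 2)%nat).
  set (f := fun k => s n p k * vnorm2 d (nablap n p F k)).
  assert (Hc : (1 <= c)%nat /\ (n <= 4 * p * c)%nat /\ (c <= S (L / 2))%nat /\ (S (L / 2) + c = S L)%nat).
  { unfold c, L. assert (Hd := Nat.div_mod (n + 1 - p) 2 ltac:(lia)).
    assert (Hm := Nat.mod_upper_bound (n + 1 - p) 2 ltac:(lia)). nia. }
  destruct (rsum_cnt_pigeonhole f (S (L / 2)) c ltac:(lia)) as [K [HK HfK]].
  assert (Hsum : rsum_cnt f (S (L / 2)) c <= INR n * wnorm n d p p F)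
    by (apply rsum_cnt_le_wnorm; lia).
  assert (Hnc : INR n <= 4 * INR p * INR c).
  { replace (4 * INR p * INR c) with (INR (4 * p * c)) by (rewrite !mult_INR; simpl; ring).
    apply le_INR; lia. }
  assert (0 <= f K) by (apply Rmult_le_pos; [apply (s_nonneg n Hn)|apply vnorm2_nonneg]).
  assert (0 <= INR p) by apply pos_INR.
  exists K. split; [lia|]. split.
  { apply Nat.le_trans with (4 * p * c)%nat; [lia|apply Nat.mul_le_mono_l; lia]. }
  fold (f K).
  apply Rmult_le_reg_r with (INR n); [lra|]. nra.
Qed.

Lemma rsum_cnt_top_compare (g : seqv) r q P lo L :
  (lo + L <= n + 2)%nat -> (n <= 4 * P * lo)%nat ->
  rsum_cnt (fun k => s n r k * vnorm2 d (g k)) lo L <=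
  (2 + INR r) ^ r * (4 * INR P) ^ q * rsum_cnt (fun k => s n q k * vnorm2 d (g k)) lo L.
Proof.
  intros HL HP. rewrite <- rsum_cnt_scal. apply rsum_cnt_le. intros k Hk.
  rewrite <- Rmult_assoc. apply Rmult_le_compat_r; [apply vnorm2_nonneg|].
  apply (s_top_compare n Hn); nia.
Qed.

Lemma rsum_cnt_vnorm2_le_wnorm P q F lo L : (n <= 4 * P * lo)%nat -> (1 <= lo)%nat ->
  (lo + L <= S (n + 1 - q))%nat ->
  rsum_cnt (fun k => vnorm2 d (nablap n q F k)) lo L <= (4 * INR P) ^ q * (INR n * wnorm n d q q F).
Proof.
  intros HP Hlo HL.
  apply Rle_trans with ((4 * INR P) ^ q * rsum_cnt (fun k => s n q k * vnorm2 d (nablap n q F k)) lo L).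
  - rewrite <- rsum_cnt_scal. apply rsum_cnt_le. intros k Hk.
    assert (H := s_ge_inv_pow n Hn P q k ltac:(nia)).
    assert (0 <= vnorm2 d (nablap n q F k)) by apply vnorm2_nonneg.
    rewrite <- Rmult_assoc. nra.
  - apply Rmult_le_compat_l; [apply pow_le; assert (0 <= INR P) by apply pos_INR; lra|].
    now apply rsum_cnt_le_wnorm.
Qed.

Lemma anchor_value_le p F K q : anchor n d p F K ->
  s n q K * vnorm2 d (nablap n p F K) <=
  (2 + INR q) ^ q * (4 * INR p) ^ p * (4 * INR p * wnorm n d p p F).
Proof.
  intros (HK & HP & HfK).
  apply Rle_trans with ((2 + INR q) ^ q * (4 * INR p) ^ p * (s n p K * vnorm2 d (nablap n p F K))).
  - rewrite <- Rmult_assoc. apply Rmult_le_compat_r; [apply vnorm2_nonneg|].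
    apply (s_top_compare n Hn); lia.
  - apply Rmult_le_compat_l; [|exact HfK].
    assert (0 <= INR q) by apply pos_INR. assert (0 <= INR p) by apply pos_INR.
    apply Rmult_le_pos; apply pow_le; lra.
Qed.

Lemma rsum_below_anchor p r F K : anchor n d p F K ->
  rsum_cnt (fun k => s n r k * vnorm2 d (nablap n p F k)) 1 K <=
  2 * INR n * (s n (S r) K * vnorm2 d (nablap n p F K) + 2 * wnorm n d (S (S r)) (S p) F).
Proof.
  intros (HK & _).
  assert (Hardy := hardy_sum n d Hn (nablap n p F) r K ltac:(lia)).
  assert (Hd : rsum_cnt (fun k => s n (S (S r)) k * vnorm2 d (nablap n (S p) F k)) 1 (K - 1) <=
               INR n * wnorm n d (S (S r)) (S p) F) by (apply rsum_cnt_le_wnorm; lia).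
  assert (0 <= rsum_cnt (fun k => s n r k * vnorm2 d (nablap n p F k)) 1 K)
    by (apply rsum_cnt_nonneg; intros; apply Rmult_le_pos; [apply (s_nonneg n Hn)|apply vnorm2_nonneg]).
  assert (0 <= INR r) by apply pos_INR.
  change (nabla n (nablap n p F)) with (nablap n (S p) F) in Hardy. nra.
Qed.

Lemma rsum_above_anchor p r F K : anchor n d p F K ->
  rsum_cnt (fun k => s n r k * vnorm2 d (nablap n p F k)) (S K) (n + 1 - p - K) <=
  (2 + INR r) ^ r * (4 * INR p) ^ p * (INR n * wnorm n d p p F).
Proof.
  intros (HK & HP & _).
  eapply Rle_trans; [apply rsum_cnt_top_compare with (q := p) (P := p); nia|].
  apply Rmult_le_compat_l; [|apply rsum_cnt_le_wnorm; lia].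
  assert (0 <= INR r) by apply pos_INR. assert (0 <= INR p) by apply pos_INR.
  apply Rmult_le_pos; apply pow_le; lra.
Qed.

Lemma vnorm2_above_anchor p F K k : anchor n d p F K -> (K <= k <= n + 1 - p)%nat ->
  vnorm2 d (nablap n p F k) <=
  (4 * INR p) ^ p * (8 * INR p + 1) * (wnorm n d p p F + wnorm n d (S p) (S p) F).
Proof.
  intros HK Hk. assert (Top := anchor_value_le p F K 0 HK). destruct HK as (HK & HP & _).
  rewrite s_0, pow_O, !Rmult_1_l in Top.
  assert (Hnpos := INR_mesh_pos n Hn). assert (1 <= INR n) by (apply (le_INR 1); lia).
  assert (Asc := vnorm2_ascent n d Hn (nablap n p F) K (k - K)).
  replace (K + (k - K))%nat with k in Asc by lia.
  rewrite rsum_cnt_plus, !rsum_cnt_scal in Asc.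
  assert (Sum1 := rsum_cnt_vnorm2_le_wnorm p p F K (k - K) HP ltac:(lia) ltac:(lia)).
  assert (Sum2 := rsum_cnt_vnorm2_le_wnorm p (S p) F K (k - K) HP ltac:(lia) ltac:(lia)).
  change (nablap n (S p) F) with (nabla n (nablap n p F)) in Sum2.
  assert (0 <= rsum_cnt (fun m => vnorm2 d (nabla n (nablap n p F) m)) K (k - K))
    by (apply rsum_cnt_nonneg; intros; apply vnorm2_nonneg).
  assert (Q1 := wnorm_nonneg p p F). assert (Q2 := wnorm_nonneg (S p) (S p) F).
  set (c := 4 * INR p) in *. assert (0 <= INR p) by apply pos_INR.
  assert (0 <= c ^ p) by (apply pow_le; unfold c; lra). simpl pow in Sum2.
  assert (Hc : (1 + INR n) * (/ INR n) ^ 2 <= 2 * / INR n).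
  { apply Rmult_le_reg_r with (INR n ^ 2); [nra|].
    replace ((1 + INR n) * (/ INR n) ^ 2 * INR n ^ 2) with (1 + INR n) by (field; lra).
    replace (2 * / INR n * INR n ^ 2) with (2 * INR n) by (field; lra). lra. }
  apply Rmult_le_compat_l with (r := / INR n) in Sum1; [|left; now apply Rinv_0_lt_compat].
  apply Rmult_le_compat with (r1 := (1 + INR n) * (/ INR n) ^ 2) (r2 := 2 * / INR n) in Sum2;
    [|nra|assumption|exact Hc].
  replace (/ INR n * (c ^ p * (INR n * wnorm n d p p F))) with (c ^ p * wnorm n d p p F)
    in Sum1 by (field; lra).
  replace (2 * / INR n * (c * c ^ p * (INR n * wnorm n d (S p) (S p) F)))
    with (2 * c * (c ^ p * wnorm n d (S p) (S p) F)) in Sum2 by (field; lra).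
  assert (0 <= c ^ p * (INR p * wnorm n d p p F)) by (apply Rmult_le_pos; nra).
  assert (0 <= c ^ p * wnorm n d (S p) (S p) F) by (apply Rmult_le_pos; nra).
  unfold c in *. nra.
Qed.

Lemma weighted_below_anchor p r F K k : anchor n d p F K -> (1 <= k <= K)%nat ->
  s n (S r) k * vnorm2 d (nablap n p F k) <=
  s n (S r) K * vnorm2 d (nablap n p F K) + wnorm n d r p F + 2 * wnorm n d (S (S r)) (S p) F.
Proof.
  intros (HK & _) Hk. assert (Hnpos := INR_mesh_pos n Hn).
  set (g := nablap n p F).
  assert (D := vnorm2_weighted_descent n d Hn g (s n (S r)) k (K - k) ltac:(lia)
    (fun m _ => conj (s_nonneg n Hn (S r) m) (s_mono n Hn (S r) m))).
  replace (k + (K - k))%nat with K in D by lia.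
  assert (Err : rsum_cnt (fun m => s n (S r) m / INR m * vnorm2 d (g (S m)) +
       (1 + INR m) * s n (S r) m * ((/ INR n) ^ 2 * vnorm2 d (nabla n g m))) k (K - k) <=
     / INR n * rsum_cnt (fun m => s n r m * vnorm2 d (g m)) (S k) (K - k) +
     2 * / INR n * rsum_cnt (fun m => s n (S (S r)) m * vnorm2 d (nabla n g m)) k (K - k)).
  { rewrite <- rsum_cnt_shift, <- !rsum_cnt_scal, <- rsum_cnt_plus.
    apply rsum_cnt_le. intros m Hm. cbv beta.
    assert (0 < INR m) by (apply lt_0_INR; lia).
    assert (Hs := s_succ_ge n Hn (S r) m ltac:(lia)).
    assert (0 <= (/ INR n) ^ 2 * vnorm2 d (nabla n g m))
      by (apply Rmult_le_pos; [apply pow2_ge_0|apply vnorm2_nonneg]).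
    rewrite (s_shift n Hn r m) at 1.
    apply Rplus_le_compat; [right; field; lra|].
    replace (2 * / INR n * (s n (S (S r)) m * vnorm2 d (nabla n g m)))
      with (2 * INR n * s n (S (S r)) m * ((/ INR n) ^ 2 * vnorm2 d (nabla n g m))) by (field; lra).
    now apply Rmult_le_compat_r. }
  assert (S1 : rsum_cnt (fun m => s n r m * vnorm2 d (g m)) (S k) (K - k) <= INR n * wnorm n d r p F)
    by (apply rsum_cnt_le_wnorm; lia).
  assert (S2 : rsum_cnt (fun m => s n (S (S r)) m * vnorm2 d (nablap n (S p) F m)) k (K - k) <=
               INR n * wnorm n d (S (S r)) (S p) F) by (apply rsum_cnt_le_wnorm; lia).
  change (nablap n (S p) F) with (nabla n g) in S2.
  assert (Hi : 0 < / INR n) by (apply Rinv_0_lt_compat; lra).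
  apply Rmult_le_compat_l with (r := / INR n) in S1; [|lra].
  apply Rmult_le_compat_l with (r := 2 * / INR n) in S2; [|lra].
  replace (/ INR n * (INR n * wnorm n d r p F)) with (wnorm n d r p F) in S1 by (field; lra).
  replace (2 * / INR n * (INR n * wnorm n d (S (S r)) (S p) F))
    with (2 * wnorm n d (S (S r)) (S p) F) in S2 by (field; lra).
  lra.
Qed.

Lemma s_half_gradient_sum_le p F K : (K <= n + 1 - p)%nat ->
  sqrt PI / sqrt (INR n) *
  rsum_cnt (fun m => (1 + 4 * INR m) * half_ratio m * ((/ INR n) ^ 2 * vnorm2 d (nablap n (S p) F m))) 1 (K - 1)
  <= 20 * wnorm n d 1 (S p) F.
Proof.
  intros HK. assert (Hnpos := INR_mesh_pos n Hn).
  rewrite <- rsum_cnt_scal.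
  apply Rle_trans with (20 * / INR n * rsum_cnt (fun m => s n 1 m * vnorm2 d (nablap n (S p) F m)) 1 (K - 1)).
  - rewrite <- rsum_cnt_scal. apply rsum_cnt_le. intros m Hm. rewrite s_1.
    assert (Hs4 := s_half_le_4 n Hn m ltac:(lia)). rewrite (s_half_eq n Hn) in Hs4.
    assert (Hsig := s_half_scale_nonneg n Hn). assert (Hh := half_ratio_pos m).
    assert (0 <= (/ INR n) ^ 2 * vnorm2 d (nablap n (S p) F m))
      by (apply Rmult_le_pos; [apply pow2_ge_0|apply vnorm2_nonneg]).
    assert (1 <= INR m) by (apply (le_INR 1); lia).
    replace (20 * / INR n * (INR m / INR n * vnorm2 d (nablap n (S p) F m)))
      with (20 * INR m * ((/ INR n) ^ 2 * vnorm2 d (nablap n (S p) F m))) by (field; lra).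
    rewrite <- Rmult_assoc. apply Rmult_le_compat_r; [assumption|]. nra.
  - replace (20 * wnorm n d 1 (S p) F) with (20 * / INR n * (INR n * wnorm n d 1 (S p) F)) by (field; lra).
    apply Rmult_le_compat_l; [assert (0 < / INR n) by (apply Rinv_0_lt_compat; lra); lra|].
    apply rsum_cnt_le_wnorm; lia.
Qed.

Lemma half_below_anchor p F K k : anchor n d p F K -> (1 <= k <= K)%nat ->
  s_half n k * vnorm2 d (nablap n p F k) <=
  5 * (s_half n K * vnorm2 d (nablap n p F K)) + 100 * wnorm n d 1 (S p) F.
Proof.
  intros (HK & _) Hk.
  assert (Below := half_ratio_below n d Hn (nablap n p F) K k Hk).
  assert (G := s_half_gradient_sum_le p F K ltac:(lia)).
  change (nablap n (S p) F) with (nabla n (nablap n p F)) in G.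
  rewrite !(s_half_eq n Hn). assert (Hsig := s_half_scale_nonneg n Hn).
  apply Rmult_le_compat_l with (r := sqrt PI / sqrt (INR n)) in Below; [|exact Hsig].
  lra.
Qed.

End Seminorms.

Section Energy.

Variables n d : nat.
Hypothesis Hn : (1 <= n)%nat.
Variables eta deta : seqv.

Let energy_density l k :=
  s n l k * vnorm2 d (nablap n l (ext n deta) k) + s n (S l) k * vnorm2 d (nablap n (S l) (ext n eta) k).

Lemma energy_density_nonneg l k : 0 <= energy_density l k.
Proof.
  assert (0 <= s n l k) by apply (s_nonneg n Hn). assert (0 <= s n (S l) k) by apply (s_nonneg n Hn).
  assert (0 <= vnorm2 d (nablap n l (ext n deta) k)) by apply vnorm2_nonneg.
  assert (0 <= vnorm2 d (nablap n (S l) (ext n eta) k)) by apply vnorm2_nonneg.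
  unfold energy_density. nra.
Qed.

Lemma energy_level_le l M : (l <= M)%nat ->
  / INR n * rsum_cnt (energy_density l) 1 (n - Nat.div2 l) <= energy n d M eta deta.
Proof.
  intros Hl. unfold energy. apply Rmult_le_compat_l.
  - left. apply Rinv_0_lt_compat, INR_mesh_pos, Hn.
  - change (rsum (fun l => rsum (energy_density l) 1 (n - Nat.div2 l)) 0 M)
      with (rsum_cnt (fun l => rsum (energy_density l) 1 (n - Nat.div2 l)) 0 (S M)).
    rewrite <- rsum_from_1.
    apply (rsum_cnt_term_le (fun l => rsum (energy_density l) 1 (n - Nat.div2 l))); [lia|].
    intros. rewrite rsum_from_1. apply rsum_cnt_nonneg. intros. apply energy_density_nonneg.
Qed.

Lemma energy_nonneg M : 0 <= energy n d M eta deta.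
Proof.
  eapply Rle_trans; [|apply (energy_level_le 0 M); lia].
  apply Rmult_le_pos; [left; apply Rinv_0_lt_compat, INR_mesh_pos, Hn|].
  apply rsum_cnt_nonneg. intros. apply energy_density_nonneg.
Qed.

Lemma wnorm_le_energy_level F q l : (Nat.div2 l + 1 <= q)%nat ->
  (forall k, s n q k * vnorm2 d (nablap n q F k) <= energy_density l k) ->
  wnorm n d q q F <= / INR n * rsum_cnt (energy_density l) 1 (n - Nat.div2 l).
Proof.
  intros Hq HF. apply Rmult_le_compat_l; [left; apply Rinv_0_lt_compat, INR_mesh_pos, Hn|].
  apply Rle_trans with (rsum_cnt (energy_density l) 1 (n + 1 - q)).
  - apply rsum_cnt_le. intros. apply HF.
  - apply rsum_cnt_subrange; try lia. intros. apply energy_density_nonneg.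
Qed.

Lemma wnorm_eta_le_energy q M : (1 <= q <= M + 1)%nat ->
  wnorm n d q q (ext n eta) <= energy n d M eta deta.
Proof.
  intros Hq. eapply Rle_trans; [|apply (energy_level_le (q - 1) M); lia].
  apply wnorm_le_energy_level; [pose proof (Nat.div2_decr (q - 1) (q - 1)); lia|].
  intros k. unfold energy_density. replace (S (q - 1)) with q by lia.
  assert (0 <= s n (q - 1) k * vnorm2 d (nablap n (q - 1) (ext n deta) k))
    by (apply Rmult_le_pos; [apply (s_nonneg n Hn)|apply vnorm2_nonneg]).
  lra.
Qed.

Lemma wnorm_deta_le_energy q M : (1 <= q <= M)%nat ->
  wnorm n d q q (ext n deta) <= energy n d M eta deta.
Proof.
  intros Hq. eapply Rle_trans; [|apply (energy_level_le q M); lia].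
  apply wnorm_le_energy_level; [pose proof (Nat.div2_decr q (q - 1)); lia|].
  intros k. unfold energy_density.
  assert (0 <= s n (S q) k * vnorm2 d (nablap n (S q) (ext n eta) k))
    by (apply Rmult_le_pos; [apply (s_nonneg n Hn)|apply vnorm2_nonneg]).
  lra.
Qed.

End Energy.

(** * Estimates by diagonal seminorms *)

Lemma wnorm_hardy p r : (1 <= p)%nat -> exists C, 0 <= C /\ forall n d F, (1 <= n)%nat ->
  wnorm n d r p F <= C * (wnorm n d (S (S r)) (S p) F + wnorm n d p p F).
Proof.
  intros Hp.
  set (A1 := (2 + INR (S r)) ^ S r * (4 * INR p) ^ p).
  set (A2 := (2 + INR r) ^ r * (4 * INR p) ^ p).
  assert (0 <= INR p) by apply pos_INR. assert (0 <= INR r) by apply pos_INR.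
  assert (0 <= A1) by (apply Rmult_le_pos; apply pow_le; rewrite ?S_INR; lra).
  assert (0 <= A2) by (apply Rmult_le_pos; apply pow_le; lra).
  exists (8 * INR p * A1 + 4 + A2). split; [nra|]. intros n d F Hn.
  assert (Hnpos := INR_mesh_pos n Hn).
  assert (Q1 := wnorm_nonneg n d Hn (S (S r)) (S p) F). assert (Q2 := wnorm_nonneg n d Hn p p F).
  destruct (Nat.le_gt_cases p n) as [Hpn|Hpn];
    [|rewrite wnorm_empty by lia; apply Rmult_le_pos; nra].
  destruct (anchor_exists n d Hn p F ltac:(lia)) as [K HK].
  assert (Below := rsum_below_anchor n d Hn p r F K HK).
  assert (Above := rsum_above_anchor n d Hn p r F K HK).
  assert (Top := anchor_value_le n d Hn p F K (S r) HK). fold A1 A2 in Above, Top.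
  assert (Split : INR n * wnorm n d r p F =
    rsum_cnt (fun k => s n r k * vnorm2 d (nablap n p F k)) 1 K +
    rsum_cnt (fun k => s n r k * vnorm2 d (nablap n p F k)) (S K) (n + 1 - p - K)).
  { unfold wnorm. rewrite <- Rmult_assoc, Rinv_r, Rmult_1_l by lra.
    destruct HK as (HK & _). rewrite <- rsum_cnt_app. f_equal. lia. }
  apply Rmult_le_reg_l with (INR n); [lra|]. clearbody A1 A2.
  set (q1 := wnorm n d (S (S r)) (S p) F) in *. set (q2 := wnorm n d p p F) in *.
  set (v := s n (S r) K * vnorm2 d (nablap n p F K)) in *. clearbody q1 q2 v.
  assert (INR n * v <= INR n * (A1 * (4 * INR p * q2))) by (apply Rmult_le_compat_l; lra).
  assert (0 <= INR n * (A1 * INR p) * q1) by (repeat apply Rmult_le_pos; nra).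
  assert (0 <= INR n * A2 * q1) by (repeat apply Rmult_le_pos; nra).
  assert (0 <= INR n * q2) by nra.
  nra.
Qed.

Lemma wnorm_le_diag t : forall p r, (1 <= p)%nat -> (r + t = p)%nat ->
  exists C, 0 <= C /\ forall n d F E, (1 <= n)%nat ->
    (forall q, (p <= q <= p + t)%nat -> wnorm n d q q F <= E) -> wnorm n d r p F <= C * E.
Proof.
  induction t as [|t IH]; intros p r Hp Hr.
  - exists 1. split; [lra|]. intros n d F E Hn HE.
    replace r with p by lia. rewrite Rmult_1_l. apply HE. lia.
  - destruct (wnorm_hardy p r Hp) as [C1 [HC1 H1]].
    destruct (IH (S p) (S (S r)) ltac:(lia) ltac:(lia)) as [C2 [HC2 H2]].
    exists (C1 * (C2 + 1)). split; [apply Rmult_le_pos; lra|]. intros n d F E Hn HE.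
    assert (B : wnorm n d (S (S r)) (S p) F <= C2 * E) by (apply H2; auto; intros; apply HE; lia).
    assert (Cc : wnorm n d p p F <= E) by (apply HE; lia).
    apply Rle_trans with (1 := H1 n d F Hn). rewrite Rmult_assoc.
    apply Rmult_le_compat_l; lra.
Qed.

Lemma wsup_le p r : (1 <= p)%nat -> exists C, 0 <= C /\ forall n d F, (1 <= n)%nat ->
  wsup n d (s n (S r)) p F <=
  C * (wnorm n d p p F + wnorm n d r p F + wnorm n d (S (S r)) (S p) F + wnorm n d (S p) (S p) F).
Proof.
  intros Hp.
  set (B := (2 + INR (S r)) ^ S r). set (T := (4 * INR p) ^ p * (8 * INR p + 1)).
  assert (0 <= INR p) by apply pos_INR. assert (0 <= INR (S r)) by apply pos_INR.
  assert (0 <= B) by (apply pow_le; lra).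
  assert (0 <= T) by (apply Rmult_le_pos; [apply pow_le|]; lra).
  set (A := B * (4 * INR p) ^ p * (4 * INR p)).
  assert (0 <= A) by (apply Rmult_le_pos; [apply Rmult_le_pos; [|apply pow_le]|]; lra).
  exists (A + 2 + B * T). split; [nra|]. intros n d F Hn.
  assert (Q1 := wnorm_nonneg n d Hn p p F). assert (Q2 := wnorm_nonneg n d Hn r p F).
  assert (Q3 := wnorm_nonneg n d Hn (S (S r)) (S p) F). assert (Q4 := wnorm_nonneg n d Hn (S p) (S p) F).
  apply rmax_cnt_le; [apply Rmult_le_pos; nra|]. intros k Hk.
  destruct (anchor_exists n d Hn p F ltac:(lia)) as [K HK].
  assert (Top := anchor_value_le n d Hn p F K (S r) HK).
  replace ((2 + INR (S r)) ^ S r * (4 * INR p) ^ p * (4 * INR p * wnorm n d p p F))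
    with (A * wnorm n d p p F) in Top by (unfold A, B; ring).
  destruct (Nat.le_gt_cases k K) as [HkK|HkK].
  - assert (W := weighted_below_anchor n d Hn p r F K k HK ltac:(lia)).
    assert (0 <= A * (wnorm n d r p F + wnorm n d (S (S r)) (S p) F + wnorm n d (S p) (S p) F)) by nra.
    assert (0 <= B * T * (wnorm n d p p F + wnorm n d r p F + wnorm n d (S (S r)) (S p) F +
                          wnorm n d (S p) (S p) F)) by (apply Rmult_le_pos; nra).
    lra.
  - assert (Tail := vnorm2_above_anchor n d Hn p F K k HK ltac:(destruct HK; lia)). fold T in Tail.
    assert (Hs := s_le_const n Hn (S r) k ltac:(lia)). fold B in Hs.
    assert (Hs0 := s_nonneg n Hn (S r) k). assert (Hv := vnorm2_nonneg d (nablap n p F k)).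
    apply Rle_trans with (B * (T * (wnorm n d p p F + wnorm n d (S p) (S p) F))).
    + now apply Rmult_le_compat.
    + assert (0 <= A * (wnorm n d p p F + wnorm n d r p F + wnorm n d (S (S r)) (S p) F +
                          wnorm n d (S p) (S p) F)) by nra.
      assert (0 <= B * T * (wnorm n d r p F + wnorm n d (S (S r)) (S p) F)) by (apply Rmult_le_pos; nra).
      lra.
Qed.

Lemma wsup_half_le p : (1 <= p)%nat -> exists C, 0 <= C /\ forall n d F, (1 <= n)%nat ->
  wsup n d (s_half n) p F <= C * (wnorm n d p p F + wnorm n d 1 (S p) F + wnorm n d (S p) (S p) F).
Proof.
  intros Hp. set (T := (4 * INR p) ^ p * (8 * INR p + 1)).
  assert (0 <= INR p) by apply pos_INR. assert (0 <= T) by (apply Rmult_le_pos; [apply pow_le|]; lra).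
  exists (20 * T + 100). split; [lra|]. intros n d F Hn.
  assert (Q1 := wnorm_nonneg n d Hn p p F). assert (Q2 := wnorm_nonneg n d Hn 1 (S p) F).
  assert (Q3 := wnorm_nonneg n d Hn (S p) (S p) F).
  assert (0 <= T * (wnorm n d p p F + wnorm n d 1 (S p) F + wnorm n d (S p) (S p) F))
    by (apply Rmult_le_pos; lra).
  apply rmax_cnt_le; [apply Rmult_le_pos; lra|]. intros k Hk.
  destruct (anchor_exists n d Hn p F ltac:(lia)) as [K HK].
  assert (Tail : forall k, (K <= k <= n + 1 - p)%nat ->
    s_half n k * vnorm2 d (nablap n p F k) <= 4 * (T * (wnorm n d p p F + wnorm n d (S p) (S p) F))).
  { intros k' Hk'. apply Rmult_le_compat.
    - apply (s_half_nonneg n Hn).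
    - apply vnorm2_nonneg.
    - apply (s_half_le_4 n Hn). destruct HK; lia.
    - exact (vnorm2_above_anchor n d Hn p F K k' HK Hk'). }
  assert (0 <= T * wnorm n d 1 (S p) F) by (apply Rmult_le_pos; lra).
  destruct (Nat.le_gt_cases k K) as [HkK|HkK].
  - assert (Below := half_below_anchor n d Hn p F K k HK ltac:(lia)).
    assert (HK' := Tail K ltac:(destruct HK; lia)). lra.
  - assert (Hk' := Tail k ltac:(destruct HK; lia)). lra.
Qed.

Lemma wsup_le_diag p w : (1 <= w <= p)%nat -> exists C, 0 <= C /\ forall n d F E, (1 <= n)%nat ->
  (forall q, (p <= q <= 2 * p + 1 - w)%nat -> wnorm n d q q F <= E) -> wsup n d (s n w) p F <= C * E.
Proof.
  intros Hw. destruct w as [|r]; [lia|].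
  destruct (wsup_le p r ltac:(lia)) as [C1 [HC1 H1]].
  destruct (wnorm_le_diag (p - r) p r ltac:(lia) ltac:(lia)) as [C2 [HC2 H2]].
  destruct (wnorm_le_diag (p - 1 - r) (S p) (S (S r)) ltac:(lia) ltac:(lia)) as [C3 [HC3 H3]].
  exists (C1 * (2 + C2 + C3)). split; [apply Rmult_le_pos; lra|]. intros n d F E Hn HE.
  assert (A1 : wnorm n d p p F <= E) by (apply HE; lia).
  assert (A2 : wnorm n d r p F <= C2 * E) by (apply H2; auto; intros; apply HE; lia).
  assert (A3 : wnorm n d (S (S r)) (S p) F <= C3 * E) by (apply H3; auto; intros; apply HE; lia).
  assert (A4 : wnorm n d (S p) (S p) F <= E) by (apply HE; lia).
  apply Rle_trans with (1 := H1 n d F Hn). rewrite Rmult_assoc.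
  apply Rmult_le_compat_l; lra.
Qed.

Lemma wsup_half_le_diag p : (1 <= p)%nat -> exists C, 0 <= C /\ forall n d F E, (1 <= n)%nat ->
  (forall q, (p <= q <= 2 * p + 1)%nat -> wnorm n d q q F <= E) -> wsup n d (s_half n) p F <= C * E.
Proof.
  intros Hp.
  destruct (wsup_half_le p Hp) as [C1 [HC1 H1]].
  destruct (wnorm_le_diag p (S p) 1 ltac:(lia) ltac:(lia)) as [C2 [HC2 H2]].
  exists (C1 * (2 + C2)). split; [apply Rmult_le_pos; lra|]. intros n d F E Hn HE.
  assert (A1 : wnorm n d p p F <= E) by (apply HE; lia).
  assert (A2 : wnorm n d 1 (S p) F <= C2 * E) by (apply H2; auto; intros; apply HE; lia).
  assert (A3 : wnorm n d (S p) (S p) F <= E) by (apply HE; lia).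
  apply Rle_trans with (1 := H1 n d F Hn). rewrite Rmult_assoc.
  apply Rmult_le_compat_l; lra.
Qed.

Lemma snorm2_wnorm n d r p f : snorm2 n d (s n r) p f = wnorm n d r p (ext n f).
Proof. unfold snorm2, wnorm. now rewrite rsum_from_1. Qed.

Lemma snorminf2_wsup n d w p f : snorminf2 n d w p f = wsup n d w p (ext n f).
Proof. unfold snorminf2, wsup, rmax. simpl. now rewrite Nat.sub_0_r. Qed.

Theorem lemma4p7 (d i j : nat) (hi : (1 <= i)%nat) (hj : (j < i)%nat) :
  exists C : R, forall (n : nat) (eta deta : seqv),
    (1 <= n)%nat ->
    (forall c, eta (n + 1)%nat c = 0) ->
    (forall c, deta (n + 1)%nat c = 0) ->
    snorm2 n d (s n (i - j)) i eta <= C * energy n d (i + j - 1) eta deta /\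
    snorm2 n d (s n (i - j)) i deta <= C * energy n d (i + j) eta deta /\
    snorminf2 n d (s n (i - j)) i eta <= C * energy n d (i + j) eta deta /\
    snorminf2 n d (s n (i - j)) i deta <= C * energy n d (i + j + 1) eta deta /\
    snorminf2 n d (s_half n) i deta <= C * energy n d (2 * i + 1) eta deta.
Proof.
  destruct (wnorm_le_diag j i (i - j) hi ltac:(lia)) as [C1 [HC1 H1]].
  destruct (wsup_le_diag i (i - j) ltac:(lia)) as [C2 [HC2 H2]].
  destruct (wsup_half_le_diag i hi) as [C3 [HC3 H3]].
  exists (C1 + C2 + C3). intros n eta deta Hn _ _.
  assert (Enlarge : forall c x M, 0 <= c <= C1 + C2 + C3 ->
    x <= c * energy n d M eta deta -> x <= (C1 + C2 + C3) * energy n d M eta deta).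
  { intros c x M Hc Hx. assert (0 <= energy n d M eta deta) by now apply energy_nonneg.
    apply Rle_trans with (1 := Hx). now apply Rmult_le_compat_r. }
  rewrite !snorm2_wnorm, !snorminf2_wsup. repeat split.
  - apply (Enlarge C1); [lra|]. apply H1; [exact Hn|]. intros q Hq.
    apply wnorm_eta_le_energy; [exact Hn|lia].
  - apply (Enlarge C1); [lra|]. apply H1; [exact Hn|]. intros q Hq.
    apply wnorm_deta_le_energy; [exact Hn|lia].
  - apply (Enlarge C2); [lra|]. apply H2; [exact Hn|]. intros q Hq.
    apply wnorm_eta_le_energy; [exact Hn|lia].
  - apply (Enlarge C2); [lra|]. apply H2; [exact Hn|]. intros q Hq.
    apply wnorm_deta_le_energy; [exact Hn|lia].
  - apply (Enlarge C3); [lra|]. apply H3; [exact Hn|]. intros q Hq.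
    apply wnorm_deta_le_energy; [exact Hn|lia].
Qed.
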